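(* Let $G=S_3\simeq\mathrm{PSL}_2(\mathbb{F}_2)$ and $H=\{1\}$. There is a flabby resolution $0\to J_{G/H}\to P\to F\to 0$ with $\mathrm{rank}_{\mathbb{Z}}F=7$ such that there is an isomorphism of $S_3$-lattices $$\mathbb{Z}[S_3/C_2]^{\oplus 2}\oplus\mathbb{Z}[S_3/C_3]\simeq\mathbb{Z}\oplus F$$ (rank $8$). In particular $F$ is stably permutation.
   Context: A $G$-lattice is a finitely generated $\mathbb{Z}[G]$-module free over $\mathbb{Z}$. A permutation $G$-lattice is one isomorphic to $\bigoplus_i\mathbb{Z}[G/H_i]$; $\mathbb{Z}$ denotes the trivial lattice $\mathbb{Z}[G/G]$. A $G$-lattice $M$ is stably permutation if $M\oplus P\simeq P'$ for permutation $P,P'$. $F$ is flabby if $\widehat H^{-1}(H',F)=0$ for all subgroups $H'\le G$ (Tate cohomology). A flabby resolution of $M$ is an exact sequence $0\to M\to P\to F\to0$ with $P$ permutation and $F$ flabby; the similarity class of $F$ is the flabby class $[M]^{fl}$. For $H\le G$, $I_{G/H}$ is the kernel of the augmentation $\mathbb{Z}[G/H]\to\mathbb{Z}$ and the Chevalley module is $J_{G/H}=\mathrm{Hom}_{\mathbb{Z}}(I_{G/H},\mathbb{Z})$, fitting in $0\to\mathbb{Z}\to\mathbb{Z}[G/H]\to J_{G/H}\to0$; it is the character module of the norm one torus $R^{(1)}_{K/k}(\mathbb{G}_m)$ when $G=\mathrm{Gal}(L/k)$, $H=\mathrm{Gal}(L/K)$. *)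

From HB Require Import structures.
From mathcomp Require Import all_boot all_order all_fingroup all_solvable all_algebra.
From mathcomp Require Import mxrepresentation.
Set Implicit Arguments. Unset Strict Implicit. Unset Printing Implicit Defensive.
Import GRing.Theory.
Local Open Scope ring_scope.

(* A G-lattice of Z-rank n is encoded by a matrix representation
   r : gT -> 'M[int]_n (mx_repr G r) acting on the right on row vectors
   Z^n (x . g := x *m r g). *)

Section Lattices.
Variable gT : finGroupType.
Implicit Types G H : {group gT}.

Definition is_lattice G n (r : gT -> 'M[int]_n) := mx_repr G r.

Definition gmap G m n (r1 : gT -> 'M[int]_m) (r2 : gT -> 'M[int]_n)
  (f : 'M[int]_(m, n)) := forall g, g \in G -> r1 g *m f = f *m r2 g.

Definition lat_iso G m n (r1 : gT -> 'M[int]_m) (r2 : gT -> 'M[int]_n) :=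
  exists (f : 'M[int]_(m, n)) (f' : 'M[int]_(n, m)),
    [/\ gmap G r1 r2 f, gmap G r2 r1 f', f *m f' = 1%:M & f' *m f = 1%:M].

Definition dsum m n (r1 : gT -> 'M[int]_m) (r2 : gT -> 'M[int]_n)
  : gT -> 'M[int]_(m + n) := fun g => block_mx (r1 g) 0 0 (r2 g).

Definition trivlat : gT -> 'M[int]_1 := fun _ => 1%:M.

(* permutation lattice Z[G/H]: basis = right cosets Hx of H in G,
   G acting by right multiplication Hx . g = Hxg *)
Definition coset_of_idx G H (i : 'I_#|rcosets H G|) : {set gT} :=
  @enum_val _ (mem (rcosets H G)) i.

Definition permlat G H : gT -> 'M[int]_#|rcosets H G| := fun g =>
  \matrix_(i, j) ((@coset_of_idx G H j == (@coset_of_idx G H i :* g)%g)%:R : int).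

Fixpoint psrank G (Hs : seq {group gT}) : nat :=
  match Hs with [::] => 0%N | H :: Hs' => (#|rcosets H G| + psrank G Hs')%N end.

Fixpoint permsum G (Hs : seq {group gT}) : gT -> 'M[int]_(psrank G Hs) :=
  match Hs return gT -> 'M[int]_(psrank G Hs) with
  | [::] => fun _ => 1%:M
  | H :: Hs' => dsum (permlat G H) (permsum G Hs')
  end.

Definition is_permutation G n (r : gT -> 'M[int]_n) :=
  exists Hs : seq {group gT},
    all (fun H : {group gT} => H \subset G) Hs /\ lat_iso G r (permsum G Hs).

Definition is_stably_permutation G n (r : gT -> 'M[int]_n) :=
  exists Hs Hs' : seq {group gT},
    [/\ all (fun H : {group gT} => H \subset G) Hs,
        all (fun H : {group gT} => H \subset G) Hs' &
        lat_iso G (dsum r (permsum G Hs)) (permsum G Hs')].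

(* flabby: Tate cohomology H^-1(H', F) = ker(N_{H'}) / I_{H'} F vanishes
   for every subgroup H' of G *)
Definition is_flabby G n (r : gT -> 'M[int]_n) :=
  forall H : {group gT}, H \subset G ->
    forall x : 'rV[int]_n, x *m (\sum_(h in H) r h) = 0 ->
      exists y : gT -> 'rV[int]_n, x = \sum_(h in H) y h *m (r h - 1%:M).

Definition short_exact a b c (f : 'M[int]_(a, b)) (q : 'M[int]_(b, c)) :=
  [/\ (forall x : 'rV[int]_a, x *m f = 0 -> x = 0),
      (forall z : 'rV[int]_c, exists y : 'rV[int]_b, y *m q = z) &
      (forall y : 'rV[int]_b, y *m q = 0 <-> exists x : 'rV[int]_a, x *m f = y)].

Definition flabby_resolution G m (rM : gT -> 'M[int]_m) nf
  (rF : gT -> 'M[int]_nf) :=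
  exists (p : nat) (rP : gT -> 'M[int]_p) (i : 'M[int]_(m, p)) (q : 'M[int]_(p, nf)),
    [/\ is_permutation G rP, is_lattice G rF /\ is_flabby G rF,
        gmap G rM rP i, gmap G rP rF q & short_exact i q].

(* dual lattice Hom_Z(M, Z), with (phi . g)(x) = phi(x . g^-1) *)
Definition duallat m (r : gT -> 'M[int]_m) : gT -> 'M[int]_m :=
  fun g => (r g^-1)%g^T.

Definition augm G H : 'M[int]_(#|rcosets H G|, 1) := const_mx 1.

(* J is (isomorphic to) the Chevalley module J_{G/H} = Hom_Z(I_{G/H}, Z),
   where I_{G/H} = ker(augmentation Z[G/H] -> Z) *)
Definition is_chevalley G H n (rJ : gT -> 'M[int]_n) :=
  exists (k : nat) (rI : gT -> 'M[int]_k) (iota : 'M[int]_(k, #|rcosets H G|)),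
    [/\ is_lattice G rI, gmap G rI (permlat G H) iota,
        (forall x : 'rV[int]_k, x *m iota = 0 -> x = 0),
        (forall y : 'rV[int]_#|rcosets H G|, y *m augm G H = 0 <-> exists x : 'rV[int]_k, x *m iota = y) &
        lat_iso G rJ (duallat rI)].

End Lattices.

Definition Sym3 : {group 'S_3} := [set: 'S_3]%G.
Definition Cyc2 : {group 'S_3} := <[tperm (ord0 : 'I_3) (@Ordinal 3 1 isT)]>%G.
Definition Cyc3 : {group 'S_3} := ('Alt_('I_3))%G.

(* Write P = Z[S_3]^2 and I for the augmentation ideal of Z[S_3], so that
   J = I^*.  An explicit S_3-map P -> I is onto, with a Z-split kernel K of
   rank 7, and an explicit integral matrix gives Z (+) K ~ Z[S_3/C_2]^2 (+)
   Z[S_3/C_3].  Dualising 0 -> K -> P -> I -> 0 gives 0 -> J -> P -> F -> 0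
   with F = K^*; permutation lattices are self-dual, so Z (+) F is the same
   permutation lattice.  Hence F is stably permutation, and flabby as a direct
   summand of a permutation lattice: an element killed by the norm of a
   subgroup H has coefficients summing to zero on each H-orbit, so it lies in
   the augmentation ideal of H times the lattice. *)

From HB Require Import structures.
From mathcomp Require Import all_boot all_order all_fingroup all_solvable all_algebra.
From mathcomp Require Import mxrepresentation.
Set Implicit Arguments. Unset Strict Implicit. Unset Printing Implicit Defensive.
Import GRing.Theory Num.Theory.
Local Open Scope ring_scope.

(* Identities between explicit integer matrices are checked by [vm_compute]
   on list representations, since [\matrix_] is locked. *)
Section SeqMatrix.

Definition mx_of_seq m n (l : seq (seq int)) : 'M[int]_(m, n) :=
  \matrix_(i, j) nth 0 (nth [::] l i) j.

Definition seq_sum (s : seq int) : int := foldr +%R 0 s.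

Definition seq_mulmx n p (l1 l2 : seq (seq int)) : seq (seq int) :=
  map (fun r => mkseq (fun j =>
    seq_sum (mkseq (fun k => nth 0 r k * nth 0 (nth [::] l2 k) j) n)) p) l1.

Definition seq_addmx m n (l1 l2 : seq (seq int)) : seq (seq int) :=
  mkseq (fun i => mkseq (fun j =>
    nth 0 (nth [::] l1 i) j + nth 0 (nth [::] l2 i) j) n) m.

Definition seq_idmx n : seq (seq int) :=
  mkseq (fun i => mkseq (fun j => (i == j)%:R) n) n.

Definition seq_pad n (r : seq int) : seq int := mkseq (nth 0 r) n.

Definition seq_block m1 m2 n1 (a b c d : seq (seq int)) : seq (seq int) :=
  mkseq (fun i => seq_pad n1 (nth [::] a i) ++ nth [::] b i) m1 ++
  mkseq (fun i => seq_pad n1 (nth [::] c i) ++ nth [::] d i) m2.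

Definition seq_trunc m n (l : seq (seq int)) : seq (seq int) :=
  mkseq (fun i => seq_pad n (nth [::] l i)) m.

Lemma big_ord_seq_sum n (F : nat -> int) :
  \sum_(k < n) F k = seq_sum (mkseq F n).
Proof.
rewrite -(big_mkord xpredT F) /index_iota subn0 /mkseq /seq_sum.
by elim: (iota 0 n) => [|a s IH]; rewrite ?big_nil // big_cons IH.
Qed.

Lemma mx_of_seq_mul m n p l1 l2 :
  mx_of_seq m n l1 *m mx_of_seq n p l2 = mx_of_seq m p (seq_mulmx n p l1 l2).
Proof.
apply/matrixP => i j; rewrite !mxE.
under eq_bigr do rewrite !mxE.
case: (ltnP i (size l1)) => Hi.
  by rewrite (nth_map [::]) // nth_mkseq //; apply: big_ord_seq_sum.
rewrite !nth_default ?size_map //.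
by rewrite big1 // => k _; rewrite nth_nil mul0r.
Qed.

Lemma mx_of_seq_add m n l1 l2 :
  mx_of_seq m n l1 + mx_of_seq m n l2 = mx_of_seq m n (seq_addmx m n l1 l2).
Proof. by apply/matrixP => i j; rewrite !mxE !nth_mkseq. Qed.

Lemma mx_of_seq0 m n : mx_of_seq m n [::] = 0.
Proof. by apply/matrixP => i j; rewrite !mxE !nth_nil. Qed.

Lemma mx_of_seq1 n : mx_of_seq n n (seq_idmx n) = 1%:M.
Proof. by apply/matrixP => i j; rewrite !mxE !nth_mkseq. Qed.

Lemma nth_seq_pad_cat n1 (x y : seq int) j :
  nth 0 (seq_pad n1 x ++ y) j = if (j < n1)%N then nth 0 x j else nth 0 y (j - n1).
Proof. by rewrite nth_cat size_mkseq; case: ifP => // Hj; rewrite nth_mkseq. Qed.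

Lemma mx_of_seq_block m1 m2 n1 n2 a b c d :
  block_mx (mx_of_seq m1 n1 a) (mx_of_seq m1 n2 b)
           (mx_of_seq m2 n1 c) (mx_of_seq m2 n2 d) =
  mx_of_seq (m1 + m2) (n1 + n2) (seq_block m1 m2 n1 a b c d).
Proof.
apply/matrixP => i j; rewrite !mxE /seq_block nth_cat size_mkseq.
case: splitP => i' Hi; rewrite !mxE; case: splitP => j' Hj; rewrite !mxE.
- by rewrite Hi nth_mkseq // nth_seq_pad_cat Hj ltn_ord.
- by rewrite Hi nth_mkseq // nth_seq_pad_cat Hj ltnNge leq_addr /= addKn.
- by rewrite Hi addKn nth_mkseq // nth_seq_pad_cat Hj ltn_ord.
- by rewrite Hi addKn nth_mkseq // nth_seq_pad_cat Hj ltnNge leq_addr /= addKn.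
Qed.

Lemma eq_mx_of_seq m n l1 l2 :
  seq_trunc m n l1 = seq_trunc m n l2 -> mx_of_seq m n l1 = mx_of_seq m n l2.
Proof.
move=> E; apply/matrixP => i j.
have := congr1 (fun l => nth 0 (nth [::] l i) j) E.
by rewrite /seq_trunc !nth_mkseq // !mxE.
Qed.

End SeqMatrix.

Section Lattices.
Variables (gT : finGroupType) (G : {group gT}).

Lemma gmap_mul m n p (r1 : gT -> 'M[int]_m) (r2 : gT -> 'M[int]_n)
    (r3 : gT -> 'M[int]_p) f e :
  gmap G r1 r2 f -> gmap G r2 r3 e -> gmap G r1 r3 (f *m e).
Proof. by move=> hf he g Hg; rewrite mulmxA hf // -mulmxA he // mulmxA. Qed.

Lemma gmap_inverse m n (r1 : gT -> 'M[int]_m) (r2 : gT -> 'M[int]_n) f f' :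
  gmap G r1 r2 f -> f *m f' = 1%:M -> f' *m f = 1%:M -> gmap G r2 r1 f'.
Proof.
move=> hf ff' f'f g Hg.
have -> : r2 g *m f' = f' *m (f *m r2 g) *m f' by rewrite mulmxA f'f mul1mx.
by rewrite -hf // !mulmxA -(mulmxA _ f f') ff' mulmx1.
Qed.

Lemma gmap_dual m n (r1 : gT -> 'M[int]_m) (r2 : gT -> 'M[int]_n) f :
  gmap G r1 r2 f -> gmap G (duallat r2) (duallat r1) f^T.
Proof. by move=> hf g Hg; rewrite /duallat -!trmx_mul hf // groupV. Qed.

Lemma gmap_lat_iso m n (r1 : gT -> 'M[int]_m) (r2 : gT -> 'M[int]_n) f f' :
  gmap G r1 r2 f -> f *m f' = 1%:M -> f' *m f = 1%:M -> lat_iso G r1 r2.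
Proof. by move=> hf ff' f'f; exists f, f'; split=> //; apply: gmap_inverse hf _ _. Qed.

Lemma lat_iso_refl n (r : gT -> 'M[int]_n) : lat_iso G r r.
Proof.
by apply: (@gmap_lat_iso _ _ _ _ 1%:M 1%:M) => [g _||]; rewrite ?mulmx1 ?mul1mx.
Qed.

Lemma lat_iso_sym m n (r1 : gT -> 'M[int]_m) (r2 : gT -> 'M[int]_n) :
  lat_iso G r1 r2 -> lat_iso G r2 r1.
Proof. by case=> f [f' [? ? ? ?]]; exists f', f. Qed.

Lemma lat_iso_trans m n p (r1 : gT -> 'M[int]_m) (r2 : gT -> 'M[int]_n)
    (r3 : gT -> 'M[int]_p) :
  lat_iso G r1 r2 -> lat_iso G r2 r3 -> lat_iso G r1 r3.
Proof.
case=> f [f' [hf _ ff' f'f]] [e [e' [he _ ee' e'e]]].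
apply: (gmap_lat_iso (gmap_mul hf he) (f' := e' *m f')).
  by rewrite mulmxA -(mulmxA f) ee' mulmx1 ff'.
by rewrite mulmxA -(mulmxA e') f'f mulmx1 e'e.
Qed.

Lemma lat_iso_ext m n (r1 r1' : gT -> 'M[int]_m) (r2 r2' : gT -> 'M[int]_n) :
  {in G, r1 =1 r1'} -> {in G, r2 =1 r2'} -> lat_iso G r1 r2 -> lat_iso G r1' r2'.
Proof.
move=> e1 e2 [f [f' [h1 h2 h3 h4]]]; exists f, f'; split => // g Hg.
  by rewrite -e1 // -e2 // h1.
by rewrite -e1 // -e2 // h2.
Qed.

Lemma lat_iso_dual m n (r1 : gT -> 'M[int]_m) (r2 : gT -> 'M[int]_n) :
  lat_iso G r1 r2 -> lat_iso G (duallat r1) (duallat r2).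
Proof.
case=> f [f' [_ hf' ff' f'f]]; exists f'^T, f^T; split.
- exact: gmap_dual.
- by apply: gmap_dual; apply: gmap_inverse hf' _ _.
- by rewrite -trmx_mul ff' trmx1.
- by rewrite -trmx_mul f'f trmx1.
Qed.

Lemma mulmx_dsum m1 m2 n1 n2 p1 p2 (A : 'M[int]_(m1, n1)) (A' : 'M[int]_(n1, p1))
    (B : 'M[int]_(m2, n2)) (B' : 'M[int]_(n2, p2)) :
  block_mx A 0 0 B *m block_mx A' 0 0 B' = block_mx (A *m A') 0 0 (B *m B').
Proof. by rewrite mulmx_block !mulmx0 !mul0mx !addr0 !add0r. Qed.

Lemma lat_iso_dsum m1 m2 n1 n2 (r1 : gT -> 'M[int]_m1) (r1' : gT -> 'M[int]_n1)
    (r2 : gT -> 'M[int]_m2) (r2' : gT -> 'M[int]_n2) :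
  lat_iso G r1 r1' -> lat_iso G r2 r2' -> lat_iso G (dsum r1 r2) (dsum r1' r2').
Proof.
case=> f [f' [hf _ ff' f'f]] [e [e' [he _ ee' e'e]]].
apply: (@gmap_lat_iso _ _ _ _ (block_mx f 0 0 e) (block_mx f' 0 0 e')).
- by move=> g Hg; rewrite /dsum !mulmx_dsum hf // he.
- by rewrite mulmx_dsum ff' ee' -scalar_mx_block.
- by rewrite mulmx_dsum f'f e'e -scalar_mx_block.
Qed.

Lemma lat_iso_dsumC m n (r1 : gT -> 'M[int]_m) (r2 : gT -> 'M[int]_n) :
  lat_iso G (dsum r1 r2) (dsum r2 r1).
Proof.
apply: (@gmap_lat_iso _ _ _ _ (block_mx 0 1%:M 1%:M 0) (block_mx 0 1%:M 1%:M 0)).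
- move=> g _; rewrite /dsum !mulmx_block !mulmx0 !mul0mx !addr0 !add0r.
  by rewrite !mulmx1 !mul1mx.
- by rewrite mulmx_block !mulmx0 !mul0mx !addr0 !add0r !mulmx1 -scalar_mx_block.
- by rewrite mulmx_block !mulmx0 !mul0mx !addr0 !add0r !mulmx1 -scalar_mx_block.
Qed.

Lemma lat_iso_dsum_nil m (r : gT -> 'M[int]_m) :
  lat_iso G (dsum r (permsum G [::])) r.
Proof.
apply: (@gmap_lat_iso _ _ _ _ (col_mx 1%:M 0) (row_mx 1%:M 0)).
- move=> g _; rewrite /dsum mul_block_col mul_col_mx !mulmx0 !mul0mx !addr0.
  by rewrite mulmx1 mul1mx.
- rewrite mul_col_row mulmx1 mulmx0 mul0mx [RHS]scalar_mx_block.
  by congr block_mx; apply/matrixP => -[].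
- by rewrite mul_row_col mulmx1 mulmx0 addr0.
Qed.

Lemma dsum_repr m n (r1 : gT -> 'M[int]_m) (r2 : gT -> 'M[int]_n) :
  mx_repr G r1 -> mx_repr G r2 -> mx_repr G (dsum r1 r2).
Proof.
move=> [h1 h2] [k1 k2]; split; first by rewrite /dsum h1 k1 -scalar_mx_block.
by move=> g h Hg Hh; rewrite /dsum mulmx_dsum h2 // k2.
Qed.

Lemma dual_repr m (r : gT -> 'M[int]_m) : mx_repr G r -> mx_repr G (duallat r).
Proof.
move=> [h1 h2]; split; first by rewrite /duallat invg1 h1 trmx1.
by move=> g h Hg Hh; rewrite /duallat invMg h2 ?groupV // trmx_mul.
Qed.

Lemma trivlat_repr : mx_repr G (@trivlat gT).
Proof. by split => // g h _ _; rewrite /trivlat mulmx1. Qed.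

Lemma dsum_selfdual m n (r1 : gT -> 'M[int]_m) (r2 : gT -> 'M[int]_n) :
  {in G, duallat r1 =1 r1} -> {in G, duallat r2 =1 r2} ->
  {in G, duallat (dsum r1 r2) =1 dsum r1 r2}.
Proof.
move=> h1 h2 g Hg; move: (h1 g Hg) (h2 g Hg).
by rewrite /duallat /dsum tr_block_mx !trmx0 => -> ->.
Qed.

Lemma split_short_exact a b c (i : 'M[int]_(a, b)) (q : 'M[int]_(b, c))
    (r : 'M[int]_(b, a)) (j : 'M[int]_(c, b)) :
  i *m r = 1%:M -> j *m q = 1%:M -> r *m i + q *m j = 1%:M -> i *m q = 0 ->
  short_exact i q.
Proof.
move=> ir jq rqj iq; split.
- move=> x Hx; have -> : x = x *m i *m r by rewrite -mulmxA ir mulmx1.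
  by rewrite Hx mul0mx.
- by move=> z; exists (z *m j); rewrite -mulmxA jq mulmx1.
- move=> y; split => [Hy|[x <-]]; last by rewrite -mulmxA iq mulmx0.
  exists (y *m r).
  by rewrite -{2}[y]mulmx1 -rqj mulmxDr !mulmxA Hy mul0mx addr0.
Qed.

End Lattices.

Section Flabby.
Variables (gT : finGroupType) (G : {group gT}).

Lemma sum_row_dsum (A : {set gT}) p m1 m2 (y1 : gT -> 'M[int]_(p, m1))
    (y2 : gT -> 'M[int]_(p, m2)) (M1 : gT -> 'M[int]_m1) (M2 : gT -> 'M[int]_m2) :
  \sum_(h in A) row_mx (y1 h) (y2 h) *m block_mx (M1 h) 0 0 (M2 h) =
  row_mx (\sum_(h in A) y1 h *m M1 h) (\sum_(h in A) y2 h *m M2 h).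
Proof.
apply: (big_rec3 (fun a b c => a = row_mx b c)) => [|h a b c _ ->].
  by rewrite row_mx0.
by rewrite mul_row_block !mulmx0 addr0 add0r add_row_mx.
Qed.

Lemma dsum_subr1 m1 m2 (r1 : gT -> 'M[int]_m1) (r2 : gT -> 'M[int]_m2) g :
  dsum r1 r2 g - 1%:M = block_mx (r1 g - 1%:M) 0 0 (r2 g - 1%:M).
Proof.
by rewrite [1%:M]scalar_mx_block opp_block_mx add_block_mx !oppr0 !addr0.
Qed.

Lemma flabby_iso m n (r1 : gT -> 'M[int]_m) (r2 : gT -> 'M[int]_n) :
  lat_iso G r1 r2 -> is_flabby G r2 -> is_flabby G r1.
Proof.
move=> [f [f' [hf hf' ff' _]]] F2 H sHG x Hx.
have inG h : h \in H -> h \in G by apply: (subsetP sHG).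
have : (x *m f) *m (\sum_(h in H) r2 h) = 0.
  rewrite -mulmxA mulmx_sumr (eq_bigr (fun h => r1 h *m f)) => [|h Hh].
    by rewrite -mulmx_suml mulmxA Hx mul0mx.
  by rewrite hf ?inG.
case/(F2 H sHG) => y Hy; exists (fun h => y h *m f').
have -> : x = x *m f *m f' by rewrite -mulmxA ff' mulmx1.
rewrite Hy mulmx_suml; apply: eq_bigr => h Hh.
by rewrite -!mulmxA mulmxBl mul1mx hf' ?inG // !mulmxBr mulmx1.
Qed.

Lemma flabby_dsum m1 m2 (r1 : gT -> 'M[int]_m1) (r2 : gT -> 'M[int]_m2) :
  is_flabby G r1 -> is_flabby G r2 -> is_flabby G (dsum r1 r2).
Proof.
move=> F1 F2 H sHG x.
rewrite -[x]hsubmxK mulmx_sumr sum_row_dsum => /eqP; rewrite row_mx_eq0.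
rewrite -!mulmx_sumr => /andP[/eqP/(F1 H sHG)[y1 ->] /eqP/(F2 H sHG)[y2 ->]].
exists (fun h => row_mx (y1 h) (y2 h)).
by rewrite -sum_row_dsum; apply: eq_bigr => h _; rewrite (dsum_subr1 r1 r2).
Qed.

Lemma flabby_dsumr m1 m2 (r1 : gT -> 'M[int]_m1) (r2 : gT -> 'M[int]_m2) :
  is_flabby G (dsum r1 r2) -> is_flabby G r2.
Proof.
move=> F H sHG x Hx.
have : row_mx (0 : 'M[int]_(1, m1)) x *m (\sum_(h in H) dsum r1 r2 h) = 0.
  rewrite mulmx_sumr sum_row_dsum -!mulmx_sumr Hx mul0mx.
  by rewrite row_mx0.
case/(F H sHG) => y Hy; exists (fun h => rsubmx (y h)).
rewrite -[x](row_mxKr (0 : 'M[int]_(1, m1))) Hy.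
under eq_bigr do rewrite (dsum_subr1 r1 r2) -[y _]hsubmxK.
by rewrite sum_row_dsum row_mxKr.
Qed.

End Flabby.

Definition fun_mx m n (f : 'I_m -> 'I_n) : 'M[int]_(m, n) :=
  \matrix_(i, j) (f i == j)%:R.

Lemma eq_fun_mx m n (f g : 'I_m -> 'I_n) : f =1 g -> fun_mx f = fun_mx g.
Proof. by move=> E; apply/matrixP => i j; rewrite !mxE E. Qed.

Lemma delta_fun_mx m n (a : 'I_m) (f : 'I_m -> 'I_n) :
  (delta_mx 0 a : 'rV[int]_m) *m fun_mx f = delta_mx 0 (f a).
Proof.
apply/matrixP => i j; rewrite !mxE.
under eq_bigr do rewrite !mxE.
rewrite (bigD1 a) //= eqxx big1 ?addr0 => [|k Hk]; last first.
  by rewrite (negbTE Hk) andbF mul0r.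
by rewrite ord1 eqxx /= mul1r eq_sym.
Qed.

Lemma fun_mx_mul m n p (f : 'I_m -> 'I_n) (g : 'I_n -> 'I_p) :
  fun_mx f *m fun_mx g = fun_mx (g \o f).
Proof.
by apply/row_matrixP => i; rewrite row_mul !rowE !delta_fun_mx.
Qed.

Lemma fun_mx_id n : fun_mx (@id 'I_n) = 1%:M.
Proof. by apply/matrixP => i j; rewrite !mxE. Qed.

Lemma tr_fun_mx m (f g : 'I_m -> 'I_m) :
  cancel f g -> cancel g f -> (fun_mx f)^T = fun_mx g.
Proof.
move=> fK gK; apply/matrixP => i j; rewrite !mxE.
have -> // : (f j == i) = (g i == j).
by apply/eqP/eqP => [<-|<-]; rewrite ?fK ?gK.
Qed.

Lemma fun_mx_const1 m n (f : 'I_m -> 'I_n) :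
  fun_mx f *m (const_mx 1 : 'cV[int]_n) = const_mx 1.
Proof.
apply/row_matrixP => i; rewrite row_mul rowE delta_fun_mx -rowE.
by apply/rowP => j; rewrite !mxE.
Qed.

Lemma fun_mx_inv m n (b : 'I_m -> 'I_n) (c : 'I_n -> 'I_m) :
  cancel b c -> fun_mx b *m fun_mx c = 1%:M.
Proof. by move=> bK; rewrite fun_mx_mul (eq_fun_mx (g := id)) ?fun_mx_id. Qed.

Section ActionLattice.
Variables (gT : finGroupType) (G : {group gT}) (m : nat) (p : gT -> 'I_m -> 'I_m).
Hypothesis act1 : forall i, p 1%g i = i.
Hypothesis actM : {in G &, forall g h i, p (g * h)%g i = p h (p g i)}.

Section Orbits.
Variable H : {group gT}.
Hypothesis sHG : H \subset G.

Let inG h : h \in H -> h \in G. Proof. exact: (subsetP sHG). Qed.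

Definition horbit i := [set p h i | h in H].

Lemma horbit_refl i : i \in horbit i.
Proof. by apply/imsetP; exists 1%g; rewrite ?group1 ?act1. Qed.

Lemma horbit_eq i j : j \in horbit i -> horbit j = horbit i.
Proof.
case/imsetP => h0 Hh0 ->; apply/setP => k; apply/imsetP/imsetP => -[h Hh ->].
  by exists (h0 * h)%g; rewrite ?groupM // actM ?inG.
exists (h0^-1 * h)%g; rewrite ?groupM ?groupV //.
by rewrite actM ?inG ?groupV // -(actM (inG Hh0)) ?inG ?groupV // mulgV act1.
Qed.

Definition orbit_rep i := odflt i [pick k in horbit i].

Lemma orbit_rep_in i : orbit_rep i \in horbit i.
Proof. by rewrite /orbit_rep; case: pickP => [k //|/(_ i)]; rewrite horbit_refl. Qed.

Lemma orbit_rep_eq i j : j \in horbit i -> orbit_rep j = orbit_rep i.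
Proof.
move=> /horbit_eq E; rewrite /orbit_rep E.
by case: pickP => // /(_ i); rewrite horbit_refl.
Qed.

Lemma orbit_repK i : orbit_rep (orbit_rep i) = orbit_rep i.
Proof. exact: orbit_rep_eq (orbit_rep_in i). Qed.

Definition orbit_mover i := odflt 1%g [pick h in H | p h (orbit_rep i) == i].

Lemma orbit_moverP i : orbit_mover i \in H /\ p (orbit_mover i) (orbit_rep i) = i.
Proof.
rewrite /orbit_mover; case: pickP => [h /andP[Hh /eqP E] // | none].
have : i \in horbit (orbit_rep i) by rewrite (horbit_eq (orbit_rep_in i)) horbit_refl.
by case/imsetP => h Hh E; have := none h; rewrite Hh -E eqxx.
Qed.

Definition horbit_sum := \sum_(h in H) fun_mx (p h).

Lemma fun_mx_horbit_sum h0 : h0 \in H -> fun_mx (p h0) *m horbit_sum = horbit_sum.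
Proof.
move=> Hh0; rewrite /horbit_sum mulmx_sumr (reindex_inj (mulgI h0^-1)%g) /=.
apply: eq_big => [h|h Hh]; first by rewrite groupMl ?groupV.
rewrite fun_mx_mul; apply: eq_fun_mx => i /=.
by rewrite -actM ?inG // mulgA mulgV mul1g.
Qed.

Lemma delta_horbit_sum a k :
  (('e_a : 'rV[int]_m) *m horbit_sum) 0 k = \sum_(h in H) (p h a == k)%:R.
Proof.
rewrite /horbit_sum mulmx_sumr summxE; apply: eq_bigr => h _.
by rewrite delta_fun_mx mxE eqxx eq_sym.
Qed.

Lemma delta_horbit_sum_rep i :
  'e_(orbit_rep i) *m horbit_sum = 'e_i *m horbit_sum :> 'rV[int]_m.
Proof.
case: (orbit_moverP i) => Hh E.
by rewrite -[in LHS](fun_mx_horbit_sum Hh) mulmxA delta_fun_mx E.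
Qed.

(* [z := sum_i x_i e_(rep i)] has [z N = x N], and for a representative [k]
   coordinate [k] of [z N] is [#|stabiliser of k| * z_k]. *)
Lemma orbit_rep_sum_eq0 (x : 'rV[int]_m) :
  x *m horbit_sum = 0 -> \sum_i x 0 i *: 'e_(orbit_rep i) = 0 :> 'rV[int]_m.
Proof.
move=> Hx; set z := \sum_i _.
have zN : z *m horbit_sum = 0.
  rewrite /z mulmx_suml.
  under eq_bigr do rewrite -scalemxAl delta_horbit_sum_rep scalemxAl.
  by rewrite -mulmx_suml -row_sum_delta.
apply/rowP => k; rewrite mxE.
have zk : z 0 k = \sum_i x 0 i * (orbit_rep i == k)%:R.
  by rewrite /z summxE; apply: eq_bigr => i _; rewrite !mxE eqxx eq_sym.
rewrite zk; have [Ek|Nk] := eqVneq (orbit_rep k) k; last first.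
  rewrite big1 // => i _; case: eqP => [E|]; last by rewrite mulr0.
  by move: Nk; rewrite -E orbit_repK eqxx.
set c : int := \sum_(h in H) (p h k == k)%:R.
have c_neq0 : c != 0.
  rewrite /c -natr_sum pnatr_eq0 -lt0n (bigD1 1%g) ?group1 //= act1 eqxx.
  by rewrite add1n.
have : (z *m horbit_sum) 0 k = (\sum_i x 0 i * (orbit_rep i == k)%:R) * c.
  rewrite /z mulmx_suml summxE mulr_suml; apply: eq_bigr => i _.
  rewrite -scalemxAl mxE delta_horbit_sum -mulrA; congr (_ * _).
  have [->|Ni] := eqVneq (orbit_rep i) k; first by rewrite mul1r.
  rewrite mul0r big1 // => h Hh; case: eqP => // E.
  have : k \in horbit (orbit_rep i) by apply/imsetP; exists h.
  by move/orbit_rep_eq; rewrite orbit_repK Ek => E'; rewrite E' eqxx in Ni.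
rewrite zN mxE => /esym/eqP; rewrite mulf_eq0 (negbTE c_neq0) orbF.
by move/eqP.
Qed.

(* [x = sum_i x_i (e_i - e_(rep i))], and [e_i - e_(rep i)] is
   [e_(rep i) (g - 1)] for the mover [g] of [i]. *)
Lemma horbit_sum_kerE (x : 'rV[int]_m) : x *m horbit_sum = 0 ->
  exists y : gT -> 'rV_m, x = \sum_(h in H) y h *m (fun_mx (p h) - 1%:M).
Proof.
move=> /orbit_rep_sum_eq0 z0.
pose y h := \sum_(i | orbit_mover i == h) x 0 i *: 'e_(orbit_rep i) : 'rV[int]_m.
pose d i := 'e_(orbit_rep i) *m (fun_mx (p (orbit_mover i)) - 1%:M) : 'rV[int]_m.
exists y; have -> : \sum_(h in H) y h *m (fun_mx (p h) - 1%:M) =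
    \sum_(h in H) \sum_(i | true && (orbit_mover i == h)) x 0 i *: d i.
  apply: eq_bigr => h _; rewrite mulmx_suml; apply: eq_bigr => i /eqP <-.
  by rewrite scalemxAl.
rewrite -(partition_big _ (fun h => h \in H)) => [|i _]; last first.
  by case: (orbit_moverP i).
have dE i : d i = 'e_i - 'e_(orbit_rep i).
  by rewrite /d mulmxBr delta_fun_mx (proj2 (orbit_moverP i)) mulmx1.
under eq_bigr do rewrite dE scalerBr.
by rewrite sumrB z0 subr0 -row_sum_delta.
Qed.

End Orbits.

Variable r : gT -> 'M[int]_m.
Hypothesis rE : {in G, forall g, r g = fun_mx (p g)}.

Lemma act_repr : mx_repr G r.
Proof.
split; first by rewrite rE ?group1 // (eq_fun_mx (g := id)) ?fun_mx_id.
by move=> g h Hg Hh; rewrite !rE ?groupM // fun_mx_mul; apply: eq_fun_mx => i; apply: actM.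
Qed.

Lemma act_selfdual : {in G, duallat r =1 r}.
Proof.
move=> g Hg; rewrite /duallat !rE ?groupV //.
by apply: tr_fun_mx => i; rewrite -actM ?groupV // ?mulVg ?mulgV act1.
Qed.

Lemma act_flabby : is_flabby G r.
Proof.
move=> H sHG x.
have rEH h : h \in H -> r h = fun_mx (p h) by move=> Hh; rewrite rE ?(subsetP sHG).
rewrite (eq_bigr _ rEH) => /(horbit_sum_kerE sHG)[y ->].
by exists y; apply: eq_bigr => h Hh; rewrite rEH.
Qed.

End ActionLattice.

Section CosetLattice.
Variables (gT : finGroupType) (G : {group gT}).

Definition lat_iso_fun m n (r1 : gT -> 'M[int]_m) (r2 : gT -> 'M[int]_n) :=
  exists (b : 'I_m -> 'I_n) (c : 'I_n -> 'I_m),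
    [/\ cancel b c, cancel c b & gmap G r1 r2 (fun_mx b)].

Lemma lat_iso_funW m n (r1 : gT -> 'M[int]_m) (r2 : gT -> 'M[int]_n) :
  lat_iso_fun r1 r2 -> lat_iso G r1 r2.
Proof. by case=> b [c [bK cK hb]]; apply: (gmap_lat_iso hb); apply: fun_mx_inv. Qed.

Lemma act_lat_iso_fun m n (p1 : gT -> 'I_m -> 'I_m) (p2 : gT -> 'I_n -> 'I_n)
    (r1 : gT -> 'M[int]_m) (r2 : gT -> 'M[int]_n) (b : 'I_m -> 'I_n) (c : 'I_n -> 'I_m) :
  cancel b c -> cancel c b -> {in G, forall g i, b (p1 g i) = p2 g (b i)} ->
  {in G, forall g, r1 g = fun_mx (p1 g)} -> {in G, forall g, r2 g = fun_mx (p2 g)} ->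
  lat_iso_fun r1 r2.
Proof.
move=> bK cK Eb E1 E2; exists b, c; split=> // g Hg.
by rewrite E1 // E2 // !fun_mx_mul; apply: eq_fun_mx => i; apply: Eb.
Qed.

Variable H : {group gT}.
Local Notation cidx := (@coset_of_idx _ G H).

Definition coset_act (g : gT) (i : 'I_#|rcosets H G|) : 'I_#|rcosets H G| :=
  enum_rank_in (enum_valP i) (cidx i :* g)%g.

Lemma coset_of_idx_in i : cidx i \in rcosets H G.
Proof. exact: enum_valP. Qed.

Lemma rcosetM_in X g : X \in rcosets H G -> g \in G -> (X :* g)%g \in rcosets H G.
Proof.
case/rcosetsP => x Hx -> Hg; apply/rcosetsP; exists (x * g)%g.
  by rewrite groupM.
by rewrite rcosetM.
Qed.

Lemma coset_of_idx_act g i : g \in G ->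
  cidx (coset_act g i) = (cidx i :* g)%g.
Proof.
move=> Hg; rewrite /coset_of_idx /coset_act enum_rankK_in //.
by rewrite rcosetM_in ?coset_of_idx_in.
Qed.

Lemma permlat_fun_mx g : g \in G -> permlat G H g = fun_mx (coset_act g).
Proof.
move=> Hg; apply/matrixP => i j; rewrite !mxE.
have -> // : (cidx j == (cidx i :* g)%g) = (coset_act g i == j).
apply/eqP/eqP => [E|<-]; last by rewrite coset_of_idx_act.
by apply: enum_val_inj; rewrite -/(cidx _) coset_of_idx_act.
Qed.

Lemma rcoset_eq x y : (x * y^-1)%g \in H -> (H :* x)%g = (H :* y)%g.
Proof.
move=> Hxy; apply/setP => z; rewrite !mem_rcoset.
have -> : (z * y^-1 = z * x^-1 * (x * y^-1))%g by rewrite !mulgA mulgKV.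
by rewrite (groupMr _ Hxy).
Qed.

(* [fH] is a complete invariant of the right cosets [H x], and [sH] picks a
   representative of each value. *)
Lemma permlat_iso_fun k (pk : gT -> 'I_k -> 'I_k) (r : gT -> 'M[int]_k)
    (fH : gT -> 'I_k) (sH : 'I_k -> gT) :
  H \subset G ->
  (forall j, sH j \in G) -> (forall j, fH (sH j) = j) ->
  {in H & G, forall h x, fH (h * x)%g = fH x} ->
  {in G &, forall x y, fH x = fH y -> (x * y^-1)%g \in H} ->
  {in G &, forall x g, fH (x * g)%g = pk g (fH x)} ->
  {in G, forall g, r g = fun_mx (pk g)} ->
  lat_iso_fun (permlat G H) r.
Proof.
move=> sHG sH_in fsH fHl fH_inj fHM rE.
have sH_coset j : (H :* sH j)%g \in rcosets H G by apply/rcosetsP; exists (sH j).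
pose c j := enum_rank_in (sH_coset j) (H :* sH j)%g.
pose b (i : 'I_#|rcosets H G|) := fH (repr (cidx i)).
have bE i x : x \in G -> cidx i = (H :* x)%g -> b i = fH x.
  move=> Hx Ei; rewrite /b Ei.
  case/rcosetP: (mem_repr_rcoset H x) => a Ha ->.
  by rewrite fHl // (subsetP sHG).
have cE j : cidx (c j) = (H :* sH j)%g.
  by rewrite /coset_of_idx /c enum_rankK_in.
apply: (@act_lat_iso_fun _ _ coset_act pk _ _ b c) => //.
- move=> i; case/rcosetsP: (coset_of_idx_in i) => x Hx Ei.
  rewrite (bE i x) //; apply: enum_val_inj.
  rewrite -/(cidx _) -/(cidx _) cE Ei.
  by apply: rcoset_eq; apply: fH_inj; rewrite ?fsH.
- by move=> j; rewrite (bE (c j) (sH j)) ?cE.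
- move=> g Hg i; case/rcosetsP: (coset_of_idx_in i) => x Hx Ei.
  rewrite (bE i x) // (bE _ (x * g)%g) ?groupM ?fHM //.
  by rewrite coset_of_idx_act // Ei rcosetM.
- exact: permlat_fun_mx.
Qed.

End CosetLattice.

Definition o0 : 'I_3 := ord0.
Definition o1 : 'I_3 := Ordinal (isT : 1 < 3)%N.
Definition o2 : 'I_3 := Ordinal (isT : 2 < 3)%N.
Definition t1 : 'S_3 := tperm o0 o1.
Definition t2 : 'S_3 := tperm o0 o2.

Lemma ord3P (k : 'I_3) : [\/ k = o0, k = o1 | k = o2].
Proof.
by case: k => [[|[|[|//]]] Hk]; [constructor 1|constructor 2|constructor 3]; apply: val_inj.
Qed.

Lemma mem_Sym3 (g : 'S_3) : g \in Sym3.
Proof. by rewrite inE. Qed.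

Lemma subset_Sym3 (H : {group 'S_3}) : H \subset Sym3.
Proof. exact: subsetT. Qed.

Lemma S3_ind (P : 'S_3 -> Prop) :
  P 1%g -> (forall g h, P g -> P h -> P (g * h)%g) -> P t1 -> P t2 -> forall g, P g.
Proof.
move=> P1 PM Pt1 Pt2 g.
have : g \in <<[set tperm o0 y | y in 'I_3]>>%g by rewrite gen_tperm inE.
case/gen_prodgP => n [c Hc ->]; apply: (big_ind P) => // i _.
by case/imsetP: (Hc i) => y _ ->; case: (ord3P y) => ->; rewrite ?tperm1.
Qed.

Lemma gmap_S3 m n (r1 : 'S_3 -> 'M[int]_m) (r2 : 'S_3 -> 'M[int]_n) f :
  mx_repr Sym3 r1 -> mx_repr Sym3 r2 ->
  r1 t1 *m f = f *m r2 t1 -> r1 t2 *m f = f *m r2 t2 -> gmap Sym3 r1 r2 f.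
Proof.
move=> [h1 h2] [k1 k2] E1 E2 g _; elim/S3_ind: g => //.
  by rewrite h1 k1 mul1mx mulmx1.
move=> g h Eg Eh; rewrite h2 ?mem_Sym3 // k2 ?mem_Sym3 //.
by rewrite -mulmxA Eh !mulmxA Eg.
Qed.

Lemma odd_t1 : odd_perm t1. Proof. by rewrite odd_tperm. Qed.
Lemma odd_t2 : odd_perm t2. Proof. by rewrite odd_tperm. Qed.

Lemma fix_o2_perm (z : 'S_3) : z o2 = o2 -> z = 1%g \/ z = t1.
Proof.
move=> z2.
have z0 : z o0 != o2 by rewrite -z2 (inj_eq perm_inj).
have z1 : z o1 != o2 by rewrite -z2 (inj_eq perm_inj).
have z01 : z o0 != z o1 by rewrite (inj_eq perm_inj).
case: (ord3P (z o0)) => E0; last by rewrite E0 eqxx in z0.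
- left; apply/permP => k; rewrite perm1.
  case: (ord3P (z o1)) => E1; first by rewrite E0 E1 eqxx in z01.
    by case: (ord3P k) => ->; rewrite ?E0 ?E1 ?z2.
  by rewrite E1 eqxx in z1.
- right; apply/permP => k.
  case: (ord3P (z o1)) => E1; last 2 first.
  + by rewrite E0 E1 eqxx in z01.
  + by rewrite E1 eqxx in z1.
  by case: (ord3P k) => ->; rewrite ?E0 ?E1 ?z2 /t1 ?tpermL ?tpermR ?tpermD.
Qed.

Lemma Cyc2_fix_o2 (h : 'S_3) : h \in Cyc2 -> h o2 = o2.
Proof.
case/cycleP => k ->; elim: k => [|k IH]; first by rewrite perm1.
by rewrite expgS permM tpermD // IH.
Qed.

Lemma t1_Cyc2 : t1 \in Cyc2. Proof. exact: cycle_id. Qed.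

Definition nat_act (g : 'S_3) (i : 'I_3) : 'I_3 := g i.

Definition bool_ord (b : bool) : 'I_2 := if b then ord_max else ord0.
Definition sgn_act (g : 'S_3) (i : 'I_2) : 'I_2 := bool_ord (odd_perm g (+) (i != ord0)).

Definition ord6_val (i : 'I_6) : 'I_3 := Ordinal (ltn_pmod i (isT : 0 < 3)%N).
Definition ord6_odd (i : 'I_6) : bool := (3 <= i)%N.
Lemma ord6_pair_subproof (a : 'I_3) (b : bool) : (a + 3 * b < 6)%N.
Proof. by case: a => [[|[|[|//]]] Ha]; case: b. Qed.
Definition ord6_pair (a : 'I_3) (b : bool) : 'I_6 := Ordinal (ord6_pair_subproof a b).

(* ['I_6] encodes ['I_3 * bool]; [S_3] acts on the pair [(g 2, odd g)] of
   [g] freely and transitively, so this is the regular lattice. *)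
Definition reg_act (g : 'S_3) (i : 'I_6) : 'I_6 :=
  ord6_pair (g (ord6_val i)) (ord6_odd i (+) odd_perm g).

Lemma ord6_valK a b : ord6_val (ord6_pair a b) = a.
Proof. by apply: val_inj; case: a => [[|[|[|//]]] Ha]; case: b. Qed.
Lemma ord6_oddK a b : ord6_odd (ord6_pair a b) = b.
Proof. by case: a => [[|[|[|//]]] Ha]; case: b. Qed.
Lemma ord6_pairK i : ord6_pair (ord6_val i) (ord6_odd i) = i.
Proof. by apply: val_inj; case: i => [[|[|[|[|[|[|//]]]]]] Hi]. Qed.

Lemma nat_act1 i : nat_act 1%g i = i. Proof. exact: perm1. Qed.
Lemma nat_actM : {in Sym3 &, forall g h i, nat_act (g * h)%g i = nat_act h (nat_act g i)}.
Proof. by move=> g h _ _ i; rewrite /nat_act permM. Qed.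

Lemma sgn_act1 i : sgn_act 1%g i = i.
Proof. by rewrite /sgn_act odd_perm1; case: i => [[|[|//]] Hi]; apply: val_inj. Qed.
Lemma sgn_actM : {in Sym3 &, forall g h i, sgn_act (g * h)%g i = sgn_act h (sgn_act g i)}.
Proof.
move=> g h _ _ i; rewrite /sgn_act odd_permM.
by case: (odd_perm g); case: (odd_perm h); case: i => [[|[|//]] Hi].
Qed.

Lemma reg_act1 i : reg_act 1%g i = i.
Proof. by rewrite /reg_act perm1 odd_perm1 addbF ord6_pairK. Qed.
Lemma reg_actM : {in Sym3 &, forall g h i, reg_act (g * h)%g i = reg_act h (reg_act g i)}.
Proof. by move=> g h _ _ i; rewrite /reg_act ord6_valK ord6_oddK permM odd_permM addbA. Qed.

Definition natrep (g : 'S_3) := fun_mx (nat_act g).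
Definition sgnrep (g : 'S_3) := fun_mx (sgn_act g).
Definition regrep (g : 'S_3) := fun_mx (reg_act g).

Definition Xperm : 'S_3 -> 'M[int]_(3 + 3 + 2) := dsum (dsum natrep natrep) sgnrep.
Definition Preg : 'S_3 -> 'M[int]_(6 + 6) := dsum regrep regrep.

Lemma natrep_repr : mx_repr Sym3 natrep.
Proof. exact: (act_repr nat_act1 nat_actM). Qed.
Lemma sgnrep_repr : mx_repr Sym3 sgnrep.
Proof. exact: (act_repr sgn_act1 sgn_actM). Qed.
Lemma regrep_repr : mx_repr Sym3 regrep.
Proof. exact: (act_repr reg_act1 reg_actM). Qed.

Lemma Xperm_repr : mx_repr Sym3 Xperm.
Proof. exact: dsum_repr (dsum_repr natrep_repr natrep_repr) sgnrep_repr. Qed.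
Lemma Preg_repr : mx_repr Sym3 Preg.
Proof. exact: dsum_repr regrep_repr regrep_repr. Qed.

Lemma Xperm_selfdual : {in Sym3, duallat Xperm =1 Xperm}.
Proof.
apply: dsum_selfdual; first apply: dsum_selfdual.
- exact: (act_selfdual nat_act1 nat_actM).
- exact: (act_selfdual nat_act1 nat_actM).
- exact: (act_selfdual sgn_act1 sgn_actM).
Qed.

Lemma Preg_selfdual : {in Sym3, duallat Preg =1 Preg}.
Proof. by apply: dsum_selfdual; apply: (act_selfdual reg_act1 reg_actM). Qed.

Lemma Xperm_flabby : is_flabby Sym3 Xperm.
Proof.
apply: flabby_dsum; first apply: flabby_dsum.
- exact: (act_flabby nat_act1 nat_actM).
- exact: (act_flabby nat_act1 nat_actM).
- exact: (act_flabby sgn_act1 sgn_actM).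
Qed.

Lemma permlat_Cyc2 : lat_iso Sym3 (permlat Sym3 Cyc2) natrep.
Proof.
apply/lat_iso_funW/(@permlat_iso_fun _ _ _ _ nat_act _ (fun x : 'S_3 => x o2) (tperm o2)).
- exact: subset_Sym3.
- by move=> j; rewrite mem_Sym3.
- by move=> j; rewrite tpermL.
- by move=> h x Hh _; rewrite permM Cyc2_fix_o2.
- move=> x y _ _ E.
  have : (x * y^-1)%g o2 = o2 by rewrite permM E permK.
  by case/fix_o2_perm => ->; rewrite ?group1 ?t1_Cyc2.
- by move=> x g _ _; rewrite permM.
- by [].
Qed.

Lemma bool_ordK b : (bool_ord b != ord0) = b.
Proof. by case: b. Qed.

Lemma permlat_Cyc3 : lat_iso Sym3 (permlat Sym3 Cyc3) sgnrep.
Proof.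
apply/lat_iso_funW.
apply: (@permlat_iso_fun _ _ _ _ sgn_act _ (fun x : 'S_3 => bool_ord (odd_perm x))
  (fun j => if j == ord0 then 1%g else t1)).
- exact: subset_Sym3.
- by move=> j; rewrite mem_Sym3.
- by case=> [[|[|//]] Hj]; apply: val_inj; rewrite /= ?odd_perm1 ?odd_t1.
- by move=> h x; rewrite Alt_even odd_permM => /negbTE ->.
- move=> x y _ _ E; rewrite Alt_even odd_permM odd_permV.
  by rewrite -(bool_ordK (odd_perm x)) E bool_ordK addbb.
- by move=> x g _ _; rewrite /sgn_act odd_permM bool_ordK addbC.
- by [].
Qed.

Definition reg_rep (j : 'I_6) : 'S_3 :=
  if odd_perm (tperm o2 (ord6_val j)) == ord6_odd j then tperm o2 (ord6_val j)
  else (t1 * tperm o2 (ord6_val j))%g.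

Lemma reg_repK j : ord6_pair (reg_rep j o2) (odd_perm (reg_rep j)) = j.
Proof.
rewrite /reg_rep; case: eqP => E; first by rewrite tpermL E ord6_pairK.
have t1o2 : t1 o2 = o2 by rewrite tpermD.
rewrite permM t1o2 tpermL odd_permM odd_t1.
have -> : true (+) odd_perm (tperm o2 (ord6_val j)) = ord6_odd j.
  by move: E; case: (ord6_odd j); case: odd_perm.
by rewrite ord6_pairK.
Qed.

Lemma permlat_1 : lat_iso_fun Sym3 (permlat Sym3 1%G) regrep.
Proof.
apply: (@permlat_iso_fun _ _ _ _ reg_act _
  (fun x : 'S_3 => ord6_pair (x o2) (odd_perm x)) reg_rep).
- exact: subset_Sym3.
- by move=> j; rewrite mem_Sym3.
- exact: reg_repK.
- by move=> h x /set1gP -> _; rewrite mul1g.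
- move=> x y _ _ E.
  have E1 : x o2 = y o2 by rewrite -(ord6_valK (x o2) (odd_perm x)) E ord6_valK.
  have E2 : odd_perm x = odd_perm y.
    by rewrite -(ord6_oddK (x o2) (odd_perm x)) E ord6_oddK.
  have : (x * y^-1)%g o2 = o2 by rewrite permM E1 permK.
  case/fix_o2_perm => [->|Et]; first exact: group1.
  have : odd_perm (x * y^-1)%g = false by rewrite odd_permM odd_permV E2 addbb.
  by rewrite Et odd_t1.
- by move=> x g _ _; rewrite /reg_act ord6_valK ord6_oddK permM odd_permM.
- by [].
Qed.

Lemma permlat_Sym3 : lat_iso Sym3 (permlat Sym3 Sym3) (@trivlat _).
Proof.
apply/lat_iso_funW.
apply: (@permlat_iso_fun _ _ _ _ (fun _ => id) _ (fun _ => ord0) (fun _ => 1%g)).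
- exact: subxx.
- by move=> j; rewrite mem_Sym3.
- by move=> j; rewrite (ord1 j).
- by [].
- by move=> x y _ _ _; rewrite mem_Sym3.
- by [].
- by move=> g _; rewrite /trivlat fun_mx_id.
Qed.

Definition seq_fun_mx n (l : seq nat) : seq (seq int) :=
  map (fun k => mkseq (fun j => (k == j)%:R) n) l.

Lemma fun_mx_seq m n (f : 'I_m -> 'I_n) (l : seq nat) :
  size l = m -> (forall i : 'I_m, val (f i) = nth 0%N l i) ->
  fun_mx f = mx_of_seq m n (seq_fun_mx n l).
Proof.
move=> Hs Hf; apply/matrixP => i j; rewrite !mxE /seq_fun_mx (nth_map 0%N) ?Hs //.
by rewrite nth_mkseq // -Hf.
Qed.

Lemma const1_mx_of_seq n : const_mx 1 = mx_of_seq n 1 (nseq n [:: 1]).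
Proof. by apply/matrixP => i j; rewrite !mxE nth_nseq ltn_ord ord1. Qed.

Lemma natrep_t1 : natrep t1 = mx_of_seq 3 3 (seq_fun_mx 3 [:: 1; 0; 2]%N).
Proof. by apply: fun_mx_seq => // -[[|[|[|//]]] Hi]; rewrite /nat_act /= permE. Qed.
Lemma natrep_t2 : natrep t2 = mx_of_seq 3 3 (seq_fun_mx 3 [:: 2; 1; 0]%N).
Proof. by apply: fun_mx_seq => // -[[|[|[|//]]] Hi]; rewrite /nat_act /= permE. Qed.
Lemma sgnrep_t1 : sgnrep t1 = mx_of_seq 2 2 (seq_fun_mx 2 [:: 1; 0]%N).
Proof. by apply: fun_mx_seq => // -[[|[|//]] Hi]; rewrite /sgn_act odd_t1. Qed.
Lemma sgnrep_t2 : sgnrep t2 = mx_of_seq 2 2 (seq_fun_mx 2 [:: 1; 0]%N).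
Proof. by apply: fun_mx_seq => // -[[|[|//]] Hi]; rewrite /sgn_act odd_t2. Qed.
Lemma regrep_t1 : regrep t1 = mx_of_seq 6 6 (seq_fun_mx 6 [:: 4; 3; 5; 1; 0; 2]%N).
Proof.
by apply: fun_mx_seq => // -[[|[|[|[|[|[|//]]]]]] Hi]; rewrite /reg_act odd_t1 /= permE.
Qed.
Lemma regrep_t2 : regrep t2 = mx_of_seq 6 6 (seq_fun_mx 6 [:: 5; 4; 3; 2; 1; 0]%N).
Proof.
by apply: fun_mx_seq => // -[[|[|[|[|[|[|//]]]]]] Hi]; rewrite /reg_act odd_t2 /= permE.
Qed.

(* Explicit data for the sequence 0 -> K -> P -> I -> 0, where I is the
   augmentation ideal of Z[S_3] (coordinates indexed as in [reg_act]):
   [sigma0 : P -> Z[S_3]] is onto I, [tau0] is a section of it over I,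
   the rows of [Kmx] are a Z-basis of K = ker sigma0 with retraction [Kret],
   and [Kiso] is an isomorphism Z (+) K ~ Xperm. *)
Definition sigma0 : 'M[int]_(12, 6) := mx_of_seq 12 6
  [:: [:: -1; 0; 1; 0; 0; 0]; [:: 1; -1; 0; 0; 0; 0]; [:: 0; 1; -1; 0; 0; 0];
      [:: 0; 0; 0; -1; 1; 0]; [:: 0; 0; 0; 0; -1; 1]; [:: 0; 0; 0; 1; 0; -1];
      [:: -1; 0; 0; 1; 0; 0]; [:: 0; -1; 0; 0; 1; 0]; [:: 0; 0; -1; 0; 0; 1];
      [:: 1; 0; 0; -1; 0; 0]; [:: 0; 1; 0; 0; -1; 0]; [:: 0; 0; 1; 0; 0; -1]]%Z.
Definition tau0 : 'M[int]_(6, 12) := mx_of_seq 6 12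
  [:: [:: -1; 0; 0; 0; 0; 0; 0; 0; 0; 0; 0; 0];
      [:: -1; -1; 0; 0; 0; 0; 0; 0; 0; 0; 0; 0];
      [:: 0; 0; 0; 0; 0; 0; 0; 0; 0; 0; 0; 0];
      [:: -1; 0; 0; 0; 0; 0; 1; 0; 0; 0; 0; 0];
      [:: -1; 0; 0; 1; 0; 0; 1; 0; 0; 0; 0; 0];
      [:: -1; 0; 0; 1; 1; 0; 1; 0; 0; 0; 0; 0]]%Z.
Definition tau0_defect : 'M[int]_(1, 6) := mx_of_seq 1 6 [:: [:: 0; 0; 1; 0; 0; 0]]%Z.
Definition Kmx : 'M[int]_(7, 12) := mx_of_seq 7 12
  [:: [:: 1; 1; 1; 0; 0; 0; 0; 0; 0; 0; 0; 0];
      [:: 0; 0; 0; 1; 1; 1; 0; 0; 0; 0; 0; 0];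
      [:: 0; -1; 0; -1; 0; 0; -1; 1; 0; 0; 0; 0];
      [:: 1; 0; 0; -1; -1; 0; -1; 0; 1; 0; 0; 0];
      [:: 0; 0; 0; 0; 0; 0; 1; 0; 0; 1; 0; 0];
      [:: 0; 1; 0; 1; 0; 0; 1; 0; 0; 0; 1; 0];
      [:: -1; 0; 0; 1; 1; 0; 1; 0; 0; 0; 0; 1]]%Z.
Definition Kret : 'M[int]_(12, 7) := mx_of_seq 12 7
  [:: [::]; [::]; [:: 1]; [::]; [::]; [:: 0; 1]; [::];
      [:: 0; 0; 1]; [:: 0; 0; 0; 1]; [:: 0; 0; 0; 0; 1];
      [:: 0; 0; 0; 0; 0; 1]; [:: 0; 0; 0; 0; 0; 0; 1]]%Z.
Definition Kiso : 'M[int]_8 := mx_of_seq 8 8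
  [:: [:: 1; 1; 1; -1; -1; -1; -1; -1]; [:: -2; -2; -2; -1; -1; -1; -1; -2];
      [:: -2; -2; -2; -1; -1; -1; -2; -1]; [:: 1; 2; 1; 2; -1; 1; 1; 1];
      [:: 0; 1; 1; 2; 0; -1; 1; 0]; [:: 1; 0; 0; -2; 1; 1; 0; 0];
      [:: -1; -1; -1; -1; -1; 0; -1; -1]; [:: 0; -1; 0; -1; 1; -1; -1; 0]]%Z.
Definition Kiso_inv : 'M[int]_8 := mx_of_seq 8 8
  [:: [:: 0; 2; -1; 2; -1; 0; -1; 2]; [:: 0; -1; 2; 0; 2; 2; 0; -1];
      [:: 0; -1; -1; -1; 0; -1; 2; 0]; [:: -1; 1; 0; 3; 2; 2; 2; 3];
      [:: -1; 0; 1; 2; 3; 3; 2; 2]; [:: -1; 0; 0; 2; 2; 2; 3; 2];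
      [:: 1; 0; -1; -3; -3; -3; -3; -3]; [:: 1; -1; 0; -3; -3; -3; -3; -3]]%Z.

Definition Krep (g : 'S_3) : 'M[int]_7 := Kmx *m Preg g *m Kret.

Ltac mx_compute :=
  rewrite /sigma0 /tau0 /tau0_defect /Kmx /Kret /Kiso /Kiso_inv /Krep /Preg /Xperm
    /dsum /trivlat ?regrep_t1 ?regrep_t2 ?natrep_t1 ?natrep_t2 ?sgnrep_t1
    ?sgnrep_t2 ?const1_mx_of_seq -?mx_of_seq1 -?mx_of_seq0;
  repeat (progress rewrite ?mx_of_seq_block ?mx_of_seq_mul ?mx_of_seq_add);
  apply: eq_mx_of_seq; vm_compute; reflexivity.

Lemma Kmx_Kret : Kmx *m Kret = 1%:M. Proof. mx_compute. Qed.
Lemma sigma0_tau0_Kret : sigma0 *m tau0 + Kret *m Kmx = 1%:M. Proof. mx_compute. Qed.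
Lemma tau0_sigma0 : tau0 *m sigma0 + const_mx 1 *m tau0_defect = 1%:M.
Proof. mx_compute. Qed.
Lemma Kmx_sigma0 : Kmx *m sigma0 = 0. Proof. mx_compute. Qed.
Lemma sigma0_const1 : sigma0 *m const_mx 1 = 0 :> 'cV[int]_12. Proof. mx_compute. Qed.
Lemma Kmx_stable_t1 : Kmx *m Preg t1 *m Kret *m Kmx = Kmx *m Preg t1. Proof. mx_compute. Qed.
Lemma Kmx_stable_t2 : Kmx *m Preg t2 *m Kret *m Kmx = Kmx *m Preg t2. Proof. mx_compute. Qed.
Lemma sigma0_t1 : Preg t1 *m sigma0 = sigma0 *m regrep t1. Proof. mx_compute. Qed.
Lemma sigma0_t2 : Preg t2 *m sigma0 = sigma0 *m regrep t2. Proof. mx_compute. Qed.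
Lemma Kiso_t1 : dsum (@trivlat _) Krep t1 *m Kiso = Kiso *m Xperm t1. Proof. mx_compute. Qed.
Lemma Kiso_t2 : dsum (@trivlat _) Krep t2 *m Kiso = Kiso *m Xperm t2. Proof. mx_compute. Qed.
Lemma Kiso_Kiso_inv : Kiso *m Kiso_inv = 1%:M. Proof. mx_compute. Qed.
Lemma Kiso_inv_Kiso : Kiso_inv *m Kiso = 1%:M. Proof. mx_compute. Qed.
Lemma Xperm_assoc_t1 : Xperm t1 = dsum natrep (dsum natrep sgnrep) t1. Proof. mx_compute. Qed.
Lemma Xperm_assoc_t2 : Xperm t2 = dsum natrep (dsum natrep sgnrep) t2. Proof. mx_compute. Qed.

Lemma Kmx_stable g : Kmx *m Preg g *m Kret *m Kmx = Kmx *m Preg g.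
Proof.
elim/S3_ind: g.
- by case: Preg_repr => -> _; rewrite mulmx1 Kmx_Kret mul1mx.
- move=> g h Eg Eh; case: Preg_repr => _ ->; rewrite ?mem_Sym3 //.
  by rewrite !mulmxA -Eg -!mulmxA; move: Eh; rewrite -!mulmxA => ->.
- exact: Kmx_stable_t1.
- exact: Kmx_stable_t2.
Qed.

Lemma Krep_repr : mx_repr Sym3 Krep.
Proof.
split; first by rewrite /Krep; case: Preg_repr => -> _; rewrite mulmx1 Kmx_Kret.
move=> g h _ _; rewrite /Krep; case: Preg_repr => _ ->; rewrite ?mem_Sym3 //.
by rewrite !mulmxA Kmx_stable.
Qed.

Lemma Kmx_gmap : gmap Sym3 Krep Preg Kmx.
Proof. by move=> g _; rewrite /Krep Kmx_stable. Qed.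

Lemma K_Xperm : lat_iso Sym3 (dsum (@trivlat _) Krep) Xperm.
Proof.
apply: (gmap_lat_iso _ Kiso_Kiso_inv Kiso_inv_Kiso).
apply: gmap_S3 Kiso_t1 Kiso_t2; last exact: Xperm_repr.
exact: dsum_repr (trivlat_repr _) Krep_repr.
Qed.

Definition Frep : 'S_3 -> 'M[int]_7 := duallat Krep.

Lemma Frep_repr : mx_repr Sym3 Frep.
Proof. exact: dual_repr Krep_repr. Qed.

(* Permutation lattices are self-dual, so dualising Z (+) K ~ Xperm gives
   Z (+) F ~ Xperm. *)
Lemma F_Xperm : lat_iso Sym3 (dsum (@trivlat _) Frep) Xperm.
Proof.
apply: lat_iso_ext (lat_iso_dual K_Xperm); last exact: Xperm_selfdual.
by move=> g _; rewrite /duallat /dsum tr_block_mx !trmx0 /trivlat trmx1.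
Qed.

Lemma Frep_flabby : is_flabby Sym3 Frep.
Proof. exact: flabby_dsumr (flabby_iso F_Xperm Xperm_flabby). Qed.

Lemma Xperm_permlat :
  lat_iso Sym3
    (dsum (dsum (permlat Sym3 Cyc2) (permlat Sym3 Cyc2)) (permlat Sym3 Cyc3)) Xperm.
Proof. exact: lat_iso_dsum (lat_iso_dsum permlat_Cyc2 permlat_Cyc2) permlat_Cyc3. Qed.

Lemma Xperm_permsum : lat_iso Sym3 Xperm (permsum Sym3 [:: Cyc2; Cyc2; Cyc3]).
Proof.
apply: (lat_iso_trans (r2 := dsum natrep (dsum natrep sgnrep))).
  apply: (@gmap_lat_iso _ _ _ _ _ _ 1%:M 1%:M); rewrite ?mulmx1 //.
  apply: gmap_S3; rewrite ?mulmx1 ?mul1mx ?Xperm_assoc_t1 ?Xperm_assoc_t2 //.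
    exact: Xperm_repr.
  exact: dsum_repr natrep_repr (dsum_repr natrep_repr sgnrep_repr).
apply/lat_iso_sym/lat_iso_dsum; first exact: permlat_Cyc2.
apply: lat_iso_dsum; first exact: permlat_Cyc2.
exact: lat_iso_trans (lat_iso_dsum_nil _ _) permlat_Cyc3.
Qed.

Lemma Frep_stably_permutation : is_stably_permutation Sym3 Frep.
Proof.
exists [:: Sym3], [:: Cyc2; Cyc2; Cyc3]; split; rewrite /= ?subset_Sym3 //.
apply: lat_iso_trans (lat_iso_dsum (lat_iso_refl _ Frep) (lat_iso_dsum_nil _ _)) _.
apply: lat_iso_trans (lat_iso_dsum (lat_iso_refl _ Frep) permlat_Sym3) _.
exact: lat_iso_trans (lat_iso_dsumC _ _ _) (lat_iso_trans F_Xperm Xperm_permsum).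
Qed.

Section AugmentationKernel.
Variables (gT : finGroupType) (G H : {group gT}) (k : nat).
Variables (rI : gT -> 'M[int]_k) (iota : 'M[int]_(k, #|rcosets H G|)).
Hypothesis iota_gmap : gmap G rI (permlat G H) iota.
Hypothesis iota_inj : forall x : 'rV[int]_k, x *m iota = 0 -> x = 0.
Hypothesis iota_ker : forall y : 'rV[int]_#|rcosets H G|,
  y *m augm G H = 0 <-> exists x : 'rV[int]_k, x *m iota = y.

Lemma iota_mx_inj p (X : 'M[int]_(p, k)) : X *m iota = 0 -> X = 0.
Proof.
move=> XE; apply/row_matrixP => i; rewrite row0; apply: iota_inj.
by rewrite -row_mul XE row0.
Qed.

Lemma iota_augm : iota *m augm G H = 0.
Proof.
apply/row_matrixP => i; rewrite row_mul row0; apply/iota_ker.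
by exists (delta_mx 0 i); rewrite -rowE.
Qed.

Lemma augm_ker_gmap_lift p (rP : gT -> 'M[int]_p) (s0 : 'M[int]_(p, #|rcosets H G|)) :
  gmap G rP (permlat G H) s0 -> s0 *m augm G H = 0 ->
  exists2 s, gmap G rP rI s & s *m iota = s0.
Proof.
move=> hs0 s0aug.
have /fin_all_exists[x xE] : forall i, exists x : 'rV[int]_k, x *m iota = row i s0.
  by move=> i; apply/iota_ker; rewrite -row_mul s0aug row0.
have sE : \matrix_(i, j) x i 0 j *m iota = s0.
  apply/row_matrixP => i; rewrite row_mul -xE; congr (_ *m _).
  by apply/rowP => j; rewrite !mxE.
exists (\matrix_(i, j) x i 0 j) => // g Hg; apply/eqP; rewrite -subr_eq0; apply/eqP.
by apply: iota_mx_inj; rewrite mulmxBl -!mulmxA sE iota_gmap // mulmxA sE hs0 // subrr.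
Qed.

End AugmentationKernel.

Lemma eq_in_gmap (gT : finGroupType) (G : {group gT}) m n (r1 r1' : gT -> 'M[int]_m)
    (r2 r2' : gT -> 'M[int]_n) f :
  {in G, r1 =1 r1'} -> {in G, r2 =1 r2'} -> gmap G r1 r2 f -> gmap G r1' r2' f.
Proof. by move=> e1 e2 hf g Hg; rewrite -e1 // -e2 // hf. Qed.

Lemma sigma0_gmap : gmap Sym3 Preg regrep sigma0.
Proof. exact: gmap_S3 Preg_repr regrep_repr sigma0_t1 sigma0_t2. Qed.

(* Lifting [sigma0] through the embedding of I into Z[S_3] makes
   0 -> K -> P -> I -> 0 a split exact sequence of lattices. *)
Lemma augm_ker_split k (rI : 'S_3 -> 'M[int]_k) (iota : 'M[int]_(k, #|rcosets 1%G Sym3|)) :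
  gmap Sym3 rI (permlat Sym3 1%G) iota ->
  (forall x : 'rV[int]_k, x *m iota = 0 -> x = 0) ->
  (forall y, y *m augm Sym3 1%G = 0 <-> exists x : 'rV[int]_k, x *m iota = y) ->
  exists s t, [/\ gmap Sym3 Preg rI s, t *m s = 1%:M, Kmx *m s = 0
                & s *m t + Kret *m Kmx = 1%:M].
Proof.
move=> hiota iota_inj iota_ker.
have [b [c [bK cK hb]]] := permlat_1.
have hc := gmap_inverse hb (fun_mx_inv bK) (fun_mx_inv cK).
have [|s hs sE] := augm_ker_gmap_lift hiota iota_inj iota_ker (gmap_mul sigma0_gmap hc).
  by rewrite /augm -mulmxA fun_mx_const1 sigma0_const1.
have inj := iota_mx_inj iota_inj.
pose t := iota *m fun_mx b *m tau0.
have st : s *m t = sigma0 *m tau0.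
  by rewrite /t !mulmxA sE -(mulmxA sigma0) fun_mx_inv // mulmx1.
exists s, t; split => //.
- apply/eqP; rewrite -subr_eq0; apply/eqP/inj.
  rewrite mulmxBl mul1mx -mulmxA sE /t -!mulmxA (mulmxA tau0).
  rewrite -[tau0 *m sigma0](addrK (const_mx 1 *m tau0_defect)) tau0_sigma0.
  have iota_b_const1 : iota *m fun_mx b *m (const_mx 1 : 'cV[int]_6) = 0.
    by rewrite -mulmxA fun_mx_const1 iota_augm.
  rewrite mulmxBl mul1mx mulmxBr fun_mx_inv // mulmxBr mulmx1 !mulmxA.
  by rewrite iota_b_const1 !mul0mx subr0 subrr.
- by apply: inj; rewrite -mulmxA sE mulmxA Kmx_sigma0 mul0mx.
- by rewrite st sigma0_tau0_Kret.
Qed.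

Lemma Preg_permutation : is_permutation Sym3 Preg.
Proof.
exists [:: 1%G; 1%G]; split; first by rewrite /= !subset_Sym3.
have R1 := lat_iso_sym (lat_iso_funW permlat_1).
exact: lat_iso_dsum R1 (lat_iso_trans R1 (lat_iso_sym (lat_iso_dsum_nil _ _))).
Qed.

Lemma Frep_resolution n (rJ : 'S_3 -> 'M[int]_n) :
  is_chevalley Sym3 1%G rJ -> flabby_resolution Sym3 rJ Frep.
Proof.
case=> k [rI [iota [_ hiota iota_inj iota_ker [f [f' [hf _ ff' f'f]]]]]].
have [s [t [hs ts Ks stK]]] := augm_ker_split hiota iota_inj iota_ker.
exists 12%N, Preg, (f *m s^T), Kmx^T; split.
- exact: Preg_permutation.
- by split; [exact: Frep_repr | exact: Frep_flabby].
- apply: gmap_mul hf _; apply: eq_in_gmap (gmap_dual hs) => //.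
  exact: Preg_selfdual.
- by apply: eq_in_gmap (gmap_dual Kmx_gmap) => //; apply: Preg_selfdual.
- apply: (@split_short_exact _ _ _ _ _ (t^T *m f') Kret^T).
  + by rewrite mulmxA -(mulmxA f) -trmx_mul ts trmx1 mulmx1 ff'.
  + by rewrite -trmx_mul Kmx_Kret trmx1.
  + rewrite mulmxA -(mulmxA _ f') f'f mulmx1 -!trmx_mul -linearD /=.
    by rewrite stK trmx1.
  + by rewrite -mulmxA -trmx_mul Ks trmx0 mulmx0.
Qed.

Theorem theorem1p3 (n : nat) (rJ : 'S_3 -> 'M[int]_n) :
  is_chevalley Sym3 1%G rJ ->
  exists rF : 'S_3 -> 'M[int]_7,
    [/\ flabby_resolution Sym3 rJ rF,
        lat_iso Sym3 (dsum (dsum (permlat Sym3 Cyc2) (permlat Sym3 Cyc2)) (permlat Sym3 Cyc3))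
                   (dsum (@trivlat _) rF)
      & is_stably_permutation Sym3 rF].
Proof.
move=> chev; exists Frep; split.
- exact: Frep_resolution chev.
- exact: lat_iso_trans Xperm_permlat (lat_iso_sym F_Xperm).
- exact: Frep_stably_permutation.
Qed.
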